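(* Let $n\ge 2$ and let $m,p,k$ be integers with $1\le m\le p\le k\le n$ and $p\le n-1$. Then the number of $\alpha\in\mathcal{OCT}_n$ with $h(\alpha)=p$, $f(\alpha)=m$ and $w^+(\alpha)=k$ is $$F(n;p,m,k)=\binom{n-m-1}{n-p-1}.$$
   Context: $X_n=\{1,2,\dots,n\}$ with its usual order; maps are written on the right ($x\alpha$). A map $\alpha:X_n\to X_n$ is order-preserving if $x\le y$ implies $x\alpha\le y\alpha$, and a contraction if $|x\alpha-y\alpha|\le|x-y|$ for all $x,y$. $\mathcal{OCT}_n$ is the set of all order-preserving contractions $X_n\to X_n$ (defined on all of $X_n$). For such $\alpha$: height $h(\alpha)=|\mathrm{Im}\,\alpha|$; right waist $w^+(\alpha)=\max(\mathrm{Im}\,\alpha)$; fix $f(\alpha)=|F(\alpha)|$ where $F(\alpha)=\{x\in X_n:x\alpha=x\}$. *)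

(* X_n = {1,..,n} is modelled by 'I_n, the element i : 'I_n
   standing for i+1. Shifting by 1 preserves order, distances and fixed points;
   the right waist is max(Im) read back in X_n, i.e. (max of values) + 1. *)
From mathcomp Require Import all_boot all_order.
Set Implicit Arguments. Unset Strict Implicit. Unset Printing Implicit Defensive.

Definition ndist (x y : nat) : nat := (x - y) + (y - x).

Definition order_preserving n (a : {ffun 'I_n -> 'I_n}) : bool :=
  [forall x : 'I_n, forall y : 'I_n, (x <= y) ==> (a x <= a y)].

Definition contraction n (a : {ffun 'I_n -> 'I_n}) : bool :=
  [forall x : 'I_n, forall y : 'I_n, ndist (a x) (a y) <= ndist x y].

Definition inOCT n (a : {ffun 'I_n -> 'I_n}) : bool :=
  order_preserving a && contraction a.

Definition height n (a : {ffun 'I_n -> 'I_n}) : nat := #|[set a x | x : 'I_n]|.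

Definition rwaist n (a : {ffun 'I_n -> 'I_n}) : nat := \max_(x : 'I_n) (a x).+1.

Definition fixn n (a : {ffun 'I_n -> 'I_n}) : nat := #|[set x : 'I_n | a x == x]|.

From mathcomp Require Import all_boot all_order.
From mathcomp Require Import zify.
Set Implicit Arguments. Unset Strict Implicit. Unset Printing Implicit Defensive.

(* Shift X_n to {0, ..., n-1}.  A map a is an order-preserving contraction
   iff consecutive values differ by 0 or 1, i.e. iff it is a unit-step path.
   For such a, with a 0 = c, the stay path P x = c + x - a x counts the steps
   i < x with a i = a i.+1; it is again a unit-step path, P 0 = 0, and
     h(a) = a (n-1) + 1 - c,   w+(a) = a (n-1) + 1,   F(a) = {x | P x = c}.
   So h = p and w+ = k force c = k - p and P (n-1) = n - p, and f = m says
   that P stays exactly m points at level c.  As a unit-step path visits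
   each level along an interval, cutting out this plateau (and lowering the
   rest by one) gives an arbitrary unit-step path on n - m points from 0 to
   n - p - 1; the plateau is put back at the first time the path reaches c.
   Finally such a path is the same as its set of increment positions, an
   (n-p-1)-subset of an (n-m-1)-set, and the count is binomial. *)

Definition unit_steps (L : nat) (f : nat -> nat) : Prop :=
  forall i, i.+1 < L -> f i.+1 = f i \/ f i.+1 = (f i).+1.

Definition upath (L e : nat) (f : nat -> nat) : Prop :=
  [/\ unit_steps L f, f 0 = 0 & f L.-1 = e].

Definition plateau_path (L c m e : nat) (f : nat -> nat) : Prop :=
  upath L e f /\ #|[set x : 'I_L | f x == c]| = m.

(* u is the first time the path f reaches level c, or L if it never does. *)
Definition first_hit (L : nat) (f : nat -> nat) (c u : nat) : Prop :=
  u <= L /\ forall x, x < L -> (f x < c) = (x < u).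

Section UnitSteps.
Variables (L : nat) (f : nat -> nat).
Hypothesis fS : unit_steps L f.

Lemma unit_steps_mono i j : i <= j -> j < L -> f i <= f j.
Proof.
elim: j => [|j IH] ij jL; first by have -> : i = 0 by lia.
case: (ltngtP i j.+1) => [ij'|?|<-//]; last lia.
have := IH ij' (ltnW jL); case: (fS jL) => ->; lia.
Qed.

Lemma unit_steps_lip i j : i <= j -> j < L -> f j <= f i + (j - i).
Proof.
elim: j => [|j IH] ij jL; first by move: ij; rewrite leqn0 => /eqP ->; rewrite addn0.
case: (ltngtP i j.+1) => [ij'|?|<-]; [|lia|by rewrite subnn addn0].
have := IH ij' (ltnW jL); case: (fS jL) => ->; lia.
Qed.

Lemma unit_steps_prefix L' : L' <= L -> unit_steps L' f.
Proof. by move=> L'L i iL'; apply: fS; lia. Qed.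

End UnitSteps.

Lemma first_hit_exists L f c : unit_steps L f -> exists u, first_hit L f c u.
Proof.
elim: L => [|L IH] fS; first by exists 0; split=> // x.
have [u [uL hu]] := IH (unit_steps_prefix fS (leqnSn L)).
have fLu : f L < c -> u = L.
  move=> fLc; case: (ltnP u L) => [uL'|]; last lia.
  have := unit_steps_mono fS (ltnW uL') (ltnSn L); have := hu u uL'; rewrite ltnn; lia.
exists (if f L < c then L.+1 else u); split=> [|x]; first by case: ifP; lia.
rewrite ltnS leq_eqVlt => /orP [/eqP ->|xL]; first by case: ifP => fLc; lia.
by rewrite hu //; case: ifP => // /fLu ->; lia.
Qed.

Section FirstHit.
Variables (L : nat) (f : nat -> nat) (c u : nat).
Hypotheses (fS : unit_steps L f) (hit : first_hit L f c u).

Lemma first_hit_lt x : x < u -> f x < c.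
Proof. by case: hit => uL hu xu; rewrite hu //; lia. Qed.

Lemma first_hit_ge x : u <= x -> x < L -> c <= f x.
Proof. by case: hit => uL hu ux xL; rewrite leqNgt hu //; lia. Qed.

Lemma first_hit_at : f 0 <= c -> u < L -> f u = c.
Proof.
move=> f0 uL; have := first_hit_ge (leqnn u) uL.
have [u0|u0] := posnP u; first by rewrite u0; lia.
have := first_hit_lt (ltac:(lia) : u.-1 < u).
by case: (fS (ltac:(lia) : u.-1.+1 < L)); rewrite prednK //; lia.
Qed.

Lemma first_hit_pred : c <= (f L.-1).+1 -> 0 < u -> f u.-1 = c.-1.
Proof.
case: hit => uL _ cL u0; have := first_hit_lt (ltac:(lia) : u.-1 < u).
case: (ltngtP u L) => [uL'|?|uE]; [|lia|by rewrite uE; lia].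
have := first_hit_ge (leqnn u) uL'.
by case: (fS (ltac:(lia) : u.-1.+1 < L)); rewrite prednK //; lia.
Qed.

End FirstHit.

Lemma card_interval N lo hi : hi <= N -> #|[set x : 'I_N | lo <= x < hi]| = hi - lo.
Proof.
move=> hN; rewrite -sum1_card big_mkcond /=.
have -> : \sum_(i < N) (if i \in [set x : 'I_N | lo <= x < hi] then 1 else 0)
   = \sum_(i < N) ((lo <= i < hi) : nat).
  by apply: eq_bigr => i _; rewrite inE; case: (_ && _).
rewrite -(big_mkord xpredT (fun i => ((lo <= i < hi) : nat))).
suff -> : forall N, \sum_(0 <= i < N) ((lo <= i < hi) : nat) = minn N hi - lo.
  by rewrite (minn_idPr hN).
elim=> [|K IH]; first by rewrite big_nil min0n.
by rewrite big_nat_recr //= IH; case: (leqP lo K); case: (ltnP K hi) => /=; lia.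
Qed.

Section IncrementSets.
Variable L : nat.

Definition in_setn (B : {set 'I_L}) (i : nat) : bool := [exists b in B, val b == i].

Definition path_of_set (B : {set 'I_L}) (y : nat) : nat := \sum_(i < y) in_setn B i.

Definition set_of_path (Q : nat -> nat) : {set 'I_L} := [set i : 'I_L | Q i.+1 == (Q i).+1].

Lemma in_setn_ord B (i : 'I_L) : in_setn B i = (i \in B).
Proof.
apply/existsP/idP => [[b /andP [bB /eqP /val_inj <-]] //|iB].
by exists i; rewrite iB eqxx.
Qed.

Lemma in_setn_set_of_path Q i : in_setn (set_of_path Q) i = (i < L) && (Q i.+1 == (Q i).+1).
Proof.
apply/existsP/andP => [[b /andP [bB /eqP <-]]|[iL hQ]].
  by rewrite inE in bB; split=> //; apply: ltn_ord.
by exists (Ordinal iL); rewrite inE /= hQ eqxx.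
Qed.

Lemma path_of_setS B y : path_of_set B y.+1 = path_of_set B y + in_setn B y.
Proof. by rewrite /path_of_set big_ord_recr. Qed.

Lemma path_of_set_upath (B : {set 'I_L}) : upath L.+1 #|B| (path_of_set B).
Proof.
split=> [i _||].
- by rewrite path_of_setS; case: in_setn; [right; rewrite addn1 | left; rewrite addn0].
- by rewrite /path_of_set big_ord0.
- rewrite /= /path_of_set -sum1_card [in RHS]big_mkcond /=; apply: eq_bigr => i _.
  by rewrite in_setn_ord; case: (i \in B).
Qed.

Lemma set_of_path_of_set (B : {set 'I_L}) : set_of_path (path_of_set B) = B.
Proof.
apply/setP => i; rewrite inE path_of_setS in_setn_ord.
by case: (i \in B); [rewrite addn1 eqxx | rewrite addn0; apply: negbTE; lia].
Qed.

Lemma path_of_set_of_path Q e : upath L.+1 e Q ->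
  forall y, y <= L -> path_of_set (set_of_path Q) y = Q y.
Proof.
case=> QS Q0 _; elim=> [|y IH] yL; first by rewrite Q0 /path_of_set big_ord0.
rewrite path_of_setS IH ?in_setn_set_of_path; last lia.
rewrite (_ : y < L) //=; case: (QS y ltac:(lia)) => ->; last by rewrite eqxx addn1.
by rewrite (_ : (Q y == (Q y).+1) = false) ?addn0 //; apply: negbTE; lia.
Qed.

Lemma card_set_of_path Q e : upath L.+1 e Q -> #|set_of_path Q| = e.
Proof.
move=> hQ; have [_ _ <-] := path_of_set_upath (set_of_path Q).
by rewrite (path_of_set_of_path hQ) //; case: hQ.
Qed.

Lemma set_of_path_ext Q1 Q2 : (forall y, y <= L -> Q1 y = Q2 y) ->
  set_of_path Q1 = set_of_path Q2.
Proof. by move=> h; apply/setP => i; rewrite !inE !h //; have := ltn_ord i; lia. Qed.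

End IncrementSets.

(* Remove the level-c plateau of a path (assumed to have m points), lowering
   the part after it by one. *)
Definition cut_plateau (m c : nat) (P : nat -> nat) (y : nat) : nat :=
  if P y < c then P y else (P (y + m)).-1.

(* Conversely, insert m points at level c into a path on [0, M) at the time it
   first reaches level c, raising the part after them by one. *)
Definition insert_plateau (M m c : nat) (Q : nat -> nat) (x : nat) : nat :=
  if (x < M) && (Q x < c) then Q x
  else if (m <= x) && (c <= Q (x - m)) then (Q (x - m)).+1 else c.

Lemma cut_plateau_ext m c P1 P2 y : P1 y = P2 y -> P1 (y + m) = P2 (y + m) ->
  cut_plateau m c P1 y = cut_plateau m c P2 y.
Proof. by rewrite /cut_plateau => -> ->. Qed.

Lemma insert_plateau_ext M m c Q1 Q2 : (forall y, y < M -> Q1 y = Q2 y) ->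
  forall x, x < M + m -> insert_plateau M m c Q1 x = insert_plateau M m c Q2 x.
Proof.
move=> h x xM; rewrite /insert_plateau.
have -> : (m <= x) && (c <= Q1 (x - m)) = (m <= x) && (c <= Q2 (x - m)).
  by case: (leqP m x) => hm //=; rewrite h //; lia.
by case: (leqP m x) => hm /=; case: (ltnP x M) => hx /=; rewrite ?h //; lia.
Qed.

Section InsertPlateauShape.
Variables (M m c u : nat) (Q : nat -> nat).
Hypothesis hit : first_hit M Q c u.
Local Notation P := (insert_plateau M m c Q).

Lemma insert_plateau_below x : x < u -> P x = Q x.
Proof.
case: hit => uM _ xu.
by rewrite /insert_plateau (first_hit_lt hit xu) (_ : x < M) //; lia.
Qed.

Lemma insert_plateau_not_below x : u <= x -> (x < M) && (Q x < c) = false.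
Proof. by move=> ux; case: (ltnP x M) => //= xM; rewrite ltnNge (first_hit_ge hit ux xM). Qed.

Lemma insert_plateau_mid x : u <= x < u + m -> P x = c.
Proof.
move=> /andP [ux xum]; rewrite /insert_plateau insert_plateau_not_below //.
case: (leqP m x) => //= mx; rewrite leqNgt (first_hit_lt hit) //; lia.
Qed.

Lemma insert_plateau_above x : u + m <= x -> x < M + m -> P x = (Q (x - m)).+1.
Proof.
move=> umx xM; rewrite /insert_plateau insert_plateau_not_below; last lia.
have mx : m <= x by lia.
by rewrite mx (first_hit_ge hit (_ : u <= x - m) (_ : x - m < M)) //; lia.
Qed.

End InsertPlateauShape.
Arguments insert_plateau_below {M m c u Q} hit {x}.
Arguments insert_plateau_mid {M m c u Q} hit x.

Section InsertPlateau.
Variables (M m c u : nat) (Q : nat -> nat).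
Hypotheses (QS : unit_steps M Q) (Q0 : Q 0 = 0) (c_le : c <= (Q M.-1).+1)
  (M_gt0 : 0 < M) (m_gt0 : 0 < m) (hit : first_hit M Q c u).
Local Notation P := (insert_plateau M m c Q).

Lemma insert_plateau_steps : unit_steps (M + m) P.
Proof.
move=> i iM; have uM : u <= M by case: hit.
case: (ltnP i.+1 u) => [i1u|ui1].
  rewrite (insert_plateau_below hit i1u) (insert_plateau_below hit (ltnW i1u)).
  by apply: QS; lia.
case: (ltnP i u) => [iu|ui].
  have Qi : Q i = c.-1.
    by rewrite (_ : i = u.-1); [apply: (first_hit_pred QS hit c_le)|]; lia.
  have := first_hit_lt hit iu.
  by rewrite (insert_plateau_below hit iu) (insert_plateau_mid hit i.+1); lia.
case: (ltnP i.+1 (u + m)) => [i1um|umi1].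
  rewrite (insert_plateau_mid hit i.+1); last lia.
  by rewrite (insert_plateau_mid hit i); [left | lia].
case: (ltnP i (u + m)) => [ium|umi].
  rewrite (insert_plateau_mid hit i); last lia.
  rewrite (insert_plateau_above hit umi1 iM) (_ : i.+1 - m = u); last lia.
  by right; rewrite (first_hit_at QS hit) // ?Q0; lia.
rewrite (insert_plateau_above hit umi1 iM) (insert_plateau_above hit umi (ltnW iM)).
rewrite (_ : i.+1 - m = (i - m).+1); last lia.
by have [->|->] := @QS (i - m) ltac:(lia); [left|right].
Qed.

Lemma insert_plateau0 : P 0 = 0.
Proof.
have [u0|u0] := posnP u; last by rewrite (insert_plateau_below hit).
have := first_hit_ge hit (_ : u <= 0) M_gt0.
by rewrite (insert_plateau_mid hit 0) u0 ?Q0; lia.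
Qed.

Lemma insert_plateau_last : P (M + m).-1 = (Q M.-1).+1.
Proof.
case: (hit) => uM _; case: (ltngtP u M) => [uM'|?|uE]; [|lia|].
  have -> : M.-1 = (M + m).-1 - m by lia.
  by rewrite (insert_plateau_above hit); lia.
have := first_hit_lt hit (_ : M.-1 < u).
by rewrite (insert_plateau_mid hit _); lia.
Qed.

Lemma insert_plateau_level : #|[set x : 'I_(M + m) | P x == c]| = m.
Proof.
case: (hit) => uM _.
transitivity (u + m - u); last lia.
rewrite -(card_interval u (_ : u + m <= M + m)); last lia.
apply: eq_card => x; rewrite !inE; have xM := ltn_ord x.
case: (ltnP x u) => [xu|ux].
  by have := first_hit_lt hit xu; rewrite (insert_plateau_below hit xu) /=; lia.
case: (ltnP x (u + m)) => [xum|umx]; first by rewrite (insert_plateau_mid hit x) ?eqxx //; lia.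
have := first_hit_ge hit (_ : u <= x - m) (_ : x - m < M).
by rewrite (insert_plateau_above hit); lia.
Qed.

Lemma cut_insert_plateau y : y < M -> cut_plateau m c P y = Q y.
Proof.
move=> yM; rewrite /cut_plateau; case: (ltnP y u) => [yu|uy].
  by rewrite (insert_plateau_below hit yu) (first_hit_lt hit yu).
have cPy : c <= P y.
  case: (ltnP y (u + m)) => [yum|umy]; first by rewrite (insert_plateau_mid hit y) ?uy.
  rewrite (insert_plateau_above hit umy); last lia.
  by have := first_hit_ge hit (_ : u <= y - m) (_ : y - m < M); lia.
rewrite ltnNge cPy /= (insert_plateau_above hit (_ : u + m <= y + m)); last 2 first.
- by rewrite leq_add2r.
- by rewrite ltn_add2r.
by rewrite addnK.
Qed.

End InsertPlateau.

Section CutPlateau.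
Variables (N m c u : nat) (P : nat -> nat).
Hypotheses (PS : unit_steps N P) (P0 : P 0 = 0) (c_le : c <= P N.-1)
  (m_gt0 : 0 < m) (m_lt : m < N) (hit : first_hit N P c u)
  (level : #|[set x : 'I_N | P x == c]| = m).
Local Notation Q := (cut_plateau m c P).

(* A unit-step path stays on a level along an interval: P leaves level c
   exactly m steps after reaching it. *)
Lemma leave_hit : first_hit N P c.+1 (u + m).
Proof.
have [v [vN hv]] := first_hit_exists c.+1 PS.
have [uN hu] := hit.
suff -> : u + m = v by split.
have : #|[set x : 'I_N | P x == c]| = #|[set x : 'I_N | u <= x < v]|.
  apply: eq_card => x; rewrite !inE.
  by have := hu x (ltn_ord x); have := hv x (ltn_ord x); lia.
rewrite level card_interval //; lia.
Qed.

Lemma cut_plateau_below y : y < u -> Q y = P y.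
Proof. by move=> yu; rewrite /cut_plateau (first_hit_lt hit yu). Qed.

Lemma cut_plateau_above y : u <= y -> y < N -> Q y = (P (y + m)).-1.
Proof. by move=> uy yN; rewrite /cut_plateau ltnNge (first_hit_ge hit uy yN). Qed.

Lemma cut_plateau_hit : first_hit (N - m) Q c u.
Proof.
have [umN _] := leave_hit.
split=> [|y yN]; first lia.
case: (ltnP y u) => [yu|uy]; first by rewrite cut_plateau_below // (first_hit_lt hit yu).
rewrite cut_plateau_above //; last lia.
by have := first_hit_ge leave_hit (_ : u + m <= y + m) (_ : y + m < N); lia.
Qed.

Lemma cut_plateau_steps : unit_steps (N - m) Q.
Proof.
move=> i iN; have [umN _] := leave_hit.
case: (ltnP i.+1 u) => [i1u|ui1].
  by rewrite (cut_plateau_below i1u) (cut_plateau_below (ltnW i1u)); apply: PS; lia.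
case: (ltnP i u) => [iu|ui].
  have Pi : P i = c.-1.
    by rewrite (_ : i = u.-1); [apply: (first_hit_pred PS hit (leqW c_le))|]; lia.
  have Pum : P (u + m) = c.+1 by apply: (first_hit_at PS leave_hit); [rewrite P0|lia].
  have := first_hit_lt hit iu.
  rewrite (cut_plateau_below iu) cut_plateau_above //; last lia.
  have -> : i.+1 + m = u + m by lia.
  by rewrite Pum; lia.
have i1N : i.+1 < N by lia.
have iN' : i < N by lia.
rewrite (cut_plateau_above ui1 i1N) (cut_plateau_above ui iN') addSn.
have := first_hit_ge leave_hit (_ : u + m <= i + m) (_ : i + m < N).
by have [->|->] := @PS (i + m) ltac:(lia); lia.
Qed.

Lemma cut_plateau0 : Q 0 = 0.
Proof.
have [u0|u0] := posnP u; last by rewrite cut_plateau_below.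
have c0 : c <= 0 by rewrite -P0; apply: (first_hit_ge hit); lia.
have Pm : P (u + m) = c.+1 by apply: (first_hit_at PS leave_hit); [rewrite P0|lia].
rewrite u0 add0n in Pm.
by rewrite cut_plateau_above ?add0n ?Pm; lia.
Qed.

Lemma cut_plateau_last : Q (N - m).-1 = (P N.-1).-1.
Proof.
have [umN _] := leave_hit.
case: (ltnP (N - m).-1 u) => [lu|ul].
  have PN : P N.-1 = c.
    by have := first_hit_lt leave_hit (_ : N.-1 < u + m); lia.
  have -> : (N - m).-1 = u.-1 by lia.
  rewrite cut_plateau_below ?PN; last lia.
  by apply: (first_hit_pred PS hit (leqW c_le)); lia.
rewrite cut_plateau_above //; last lia.
by have -> : (N - m).-1 + m = N.-1 by lia.
Qed.

Lemma insert_cut_plateau x : x < N -> insert_plateau (N - m) m c Q x = P x.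
Proof.
move=> xN; have [umN _] := leave_hit.
have hitQ := cut_plateau_hit.
case: (ltnP x u) => [xu|ux].
  by rewrite (insert_plateau_below hitQ xu) cut_plateau_below.
case: (ltnP x (u + m)) => [xum|umx].
  rewrite (insert_plateau_mid hitQ x); last lia.
  by have := first_hit_ge hit ux xN; have := first_hit_lt leave_hit xum; lia.
rewrite (insert_plateau_above hitQ umx); last lia.
rewrite cut_plateau_above; [|lia|lia].
rewrite subnK; last lia.
by have := first_hit_ge leave_hit umx xN; lia.
Qed.

End CutPlateau.

Lemma insert_plateau_spec M m c e Q : upath M e Q -> c <= e.+1 -> 0 < M -> 0 < m ->
  plateau_path (M + m) c m e.+1 (insert_plateau M m c Q)
  /\ forall y, y < M -> cut_plateau m c (insert_plateau M m c Q) y = Q y.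
Proof.
move=> [QS Q0 <-] c_le M0 m0; have [u hit] := first_hit_exists c QS.
split; first split; first split.
- by apply: (insert_plateau_steps (u := u)).
- by apply: (insert_plateau0 (u := u)).
- by apply: (insert_plateau_last (u := u)).
- by apply: (insert_plateau_level (u := u)).
- by move=> y; apply: (cut_insert_plateau (u := u)).
Qed.

Lemma cut_plateau_spec N m c e P : plateau_path N c m e.+1 P -> c <= e.+1 -> 0 < m -> m < N ->
  upath (N - m) e (cut_plateau m c P)
  /\ forall x, x < N -> insert_plateau (N - m) m c (cut_plateau m c P) x = P x.
Proof.
move=> [[PS P0 Pe] level] c_le m0 mN; rewrite -Pe in c_le.
have [u hit] := first_hit_exists c PS.
split; first split.
- by apply: (cut_plateau_steps (u := u)).
- exact: (cut_plateau0 PS P0 c_le m0 mN hit level).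
- by rewrite (cut_plateau_last PS P0 c_le m0 mN hit level) Pe.
- by move=> x; apply: (insert_cut_plateau (u := u)).
Qed.

Section OCTPaths.
Variable n' : nat.
Local Notation n := n'.+1.
Implicit Types a : {ffun 'I_n -> 'I_n}.

Definition value a (x : nat) : nat := a (inord x).

(* stays a x counts the i < x with a i = a i.+1, for an order-preserving contraction. *)
Definition stays a (x : nat) : nat := value a 0 + x - value a x.

(* The map with a 0 = c whose stay path is P. *)
Definition map_of_stays (c : nat) (P : nat -> nat) : {ffun 'I_n -> 'I_n} :=
  [ffun x : 'I_n => inord (c + x - P x)].

Lemma map_of_stays_ext c P1 P2 : (forall x, x < n -> P1 x = P2 x) ->
  map_of_stays c P1 = map_of_stays c P2.
Proof. by move=> e; apply/ffunP => x; rewrite !ffunE e. Qed.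

Lemma value_ord a (x : 'I_n) : value a x = a x.
Proof. by rewrite /value inord_val. Qed.

Lemma inOCT_unit_steps a : inOCT a <-> unit_steps n (value a).
Proof.
split.
  case/andP => /forallP op /forallP ct i iN.
  move/forallP: (op (inord i)) => /(_ (inord i.+1)).
  move/forallP: (ct (inord i)) => /(_ (inord i.+1)).
  by rewrite /ndist /value !inordK; lia.
move=> aS; apply/andP; split; apply/forallP => x; apply/forallP => y; rewrite -!value_ord.
  by apply/implyP => xy; apply: (unit_steps_mono aS xy).
rewrite /ndist; case: (leqP x y) => [xy|/ltnW yx].
  by have := unit_steps_mono aS xy (ltn_ord y); have := unit_steps_lip aS xy (ltn_ord y); lia.
by have := unit_steps_mono aS yx (ltn_ord x); have := unit_steps_lip aS yx (ltn_ord x); lia.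
Qed.

(* The image of a unit-step map is the interval [a 0, a n']. *)
Lemma height_OCT a : inOCT a -> height a = (value a n').+1 - value a 0.
Proof.
move=> /inOCT_unit_steps aS.
rewrite /height -(card_interval (value a 0) (_ : value a n' < n)); last exact: ltn_ord.
apply: eq_card => y; rewrite !inE; apply/imsetP/idP.
  case=> x _ ->; rewrite -value_ord.
  have := unit_steps_mono aS (leq0n x) (ltn_ord x).
  by have := unit_steps_mono aS (ltnSE (ltn_ord x)) (ltnSn n'); lia.
move=> /andP [a0y yan].
have [u hit] := first_hit_exists y aS.
have uN : u < n by have [_ hu] := hit; have := hu n' (ltnSn n'); lia.
by exists (inord u) => //; apply: val_inj; rewrite /= -(first_hit_at aS hit a0y uN).
Qed.

Lemma rwaist_OCT a : inOCT a -> rwaist a = (value a n').+1.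
Proof.
move=> /inOCT_unit_steps aS; apply/anti_leq/andP; split.
  apply/bigmax_leqP => x _; rewrite -value_ord ltnS.
  exact: (unit_steps_mono aS (ltnSE (ltn_ord x)) (ltnSn n')).
exact: (leq_bigmax (F := fun x : 'I_n => (a x).+1) (inord n')).
Qed.

Lemma fixn_OCT a : inOCT a -> fixn a = #|[set x : 'I_n | stays a x == value a 0]|.
Proof.
move=> /inOCT_unit_steps aS; rewrite /fixn; apply: eq_card => x; rewrite !inE /stays.
have := unit_steps_lip aS (leq0n x) (ltn_ord x); rewrite value_ord subn0.
by move=> alip; apply/eqP/eqP => [->|ax]; [lia | apply: val_inj => /=; lia].
Qed.

Lemma stays_spec a p m k : inOCT a -> height a = p -> fixn a = m -> rwaist a = k ->
  plateau_path n (k - p) m (n - p) (stays a) /\ map_of_stays (k - p) (stays a) = a.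
Proof.
move=> aOCT ap am ak; have aS := iffLR (inOCT_unit_steps a) aOCT.
rewrite height_OCT // in ap; rewrite rwaist_OCT // in ak; rewrite fixn_OCT // in am.
have a0 : value a 0 = k - p by have := unit_steps_mono aS (leq0n n') (ltnSn n'); lia.
have alip x : x < n -> value a x <= value a 0 + x.
  by move=> xn; have := unit_steps_lip aS (leq0n x) xn; lia.
split; first split; first split.
- move=> i iN; rewrite /stays; have := alip i (ltnW iN).
  by have [->|->] := aS i iN; lia.
- by rewrite /stays addn0 subnn.
- by rewrite /stays /=; lia.
- by rewrite -a0.
apply/ffunP => x; apply: val_inj; rewrite ffunE /= /stays -a0 -value_ord.
by rewrite inordK; have := alip x (ltn_ord x); have := ltn_ord (a x); rewrite -value_ord; lia.
Qed.

Section MapOfStays.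
Variables (c m e : nat) (P : nat -> nat).
Hypotheses (hP : plateau_path n c m e P) (c_le : c <= e).

Lemma stays_le x : x < n -> P x <= x.
Proof. by case: hP => -[PS P0 _] _ xn; have := unit_steps_lip PS (leq0n x) xn; lia. Qed.

Lemma value_map_of_stays x : x < n -> value (map_of_stays c P) x = c + x - P x.
Proof.
case: hP => -[PS _ Pe] _ xn; rewrite /value ffunE !inordK //.
have := unit_steps_lip PS (ltnSE xn) (ltnSn n'); have := stays_le xn; rewrite /= in Pe; lia.
Qed.

Lemma map_of_stays_unit_steps : unit_steps n (value (map_of_stays c P)).
Proof.
case: hP => -[PS _ _] _ i iN; rewrite !value_map_of_stays; try lia.
by have := stays_le (ltnW iN); have [->|->] := PS i iN; lia.
Qed.

Lemma stays_map_of_stays x : x < n -> stays (map_of_stays c P) x = P x.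
Proof.
case: hP => -[_ P0 _] _ xn; rewrite /stays !value_map_of_stays // P0.
by have := stays_le xn; lia.
Qed.

Lemma map_of_stays_spec :
  [/\ inOCT (map_of_stays c P), height (map_of_stays c P) = n - e,
      fixn (map_of_stays c P) = m, rwaist (map_of_stays c P) = c + (n - e)
    & forall x, x < n -> stays (map_of_stays c P) x = P x].
Proof.
have aOCT : inOCT (map_of_stays c P) by apply/inOCT_unit_steps/map_of_stays_unit_steps.
case: (hP) => -[_ P0 Pe] level; rewrite /= in Pe.
have en : e <= n' by rewrite -Pe stays_le.
split=> //; last exact: stays_map_of_stays.
- by rewrite height_OCT // !value_map_of_stays // P0 Pe; lia.
- rewrite fixn_OCT // value_map_of_stays // P0 addn0 subn0 -level.
  by apply: eq_card => x; rewrite !inE stays_map_of_stays.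
- by rewrite rwaist_OCT // value_map_of_stays // Pe; lia.
Qed.

End MapOfStays.
End OCTPaths.

Lemma card_bij_in (T U : finType) (A : {set T}) (B : {set U}) (f : T -> U) (g : U -> T) :
  {in A, forall x, f x \in B /\ g (f x) = x} ->
  {in B, forall y, g y \in A /\ f (g y) = y} -> #|A| = #|B|.
Proof.
move=> fA gB; rewrite -(card_in_imset (f := f) (D := A)); last first.
  by move=> x y xA yA fxy; rewrite -(fA x xA).2 -(fA y yA).2 fxy.
apply: eq_card => y; apply/imsetP/idP => [[x xA ->]|yB]; first exact: (fA x xA).1.
by exists (g y); [exact: (gB y yB).1 | rewrite (gB y yB).2].
Qed.

Section Encoding.
Variables (n' m p k : nat).
Hypotheses (m_gt0 : 0 < m) (mp : m <= p) (pk : p <= k) (kn : k <= n'.+1) (pn : p <= n').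
Local Notation n := n'.+1.
Local Notation c := (k - p).
Local Notation L := (n' - m).

Definition encode (a : {ffun 'I_n -> 'I_n}) : {set 'I_L} :=
  set_of_path L (cut_plateau m c (stays a)).

Definition decode (B : {set 'I_L}) : {ffun 'I_n -> 'I_n} :=
  map_of_stays n' c (insert_plateau L.+1 m c (path_of_set B)).

Lemma encodeK a : [&& inOCT a, height a == p, fixn a == m & rwaist a == k] ->
  #|encode a| == n' - p /\ decode (encode a) = a.
Proof.
move=> /and4P [aOCT /eqP ap /eqP am /eqP ak].
have [hP aK] := stays_spec aOCT ap am ak.
rewrite (_ : n - p = (n' - p).+1) in hP; last lia.
have cs : c <= (n' - p).+1 by lia.
have mn : m < n by lia.
have [hQ QK] := cut_plateau_spec hP cs m_gt0 mn.
rewrite (_ : n - m = L.+1) in hQ QK; last lia.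
split; first by rewrite (card_set_of_path hQ).
rewrite -[RHS]aK; apply: map_of_stays_ext => x xn; rewrite -QK //.
by apply: insert_plateau_ext; [move=> y yL; apply: (path_of_set_of_path hQ) | lia].
Qed.

Lemma decodeK (B : {set 'I_L}) : #|B| == n' - p ->
  [&& inOCT (decode B), height (decode B) == p, fixn (decode B) == m & rwaist (decode B) == k]
  /\ encode (decode B) = B.
Proof.
move=> /eqP Bs; have hQ := path_of_set_upath B; rewrite Bs in hQ.
have cs : c <= (n' - p).+1 by lia.
have [hP PK] := insert_plateau_spec hQ cs (ltn0Sn L) m_gt0.
rewrite (_ : L.+1 + m = n) in hP; last lia.
have [aOCT ah af ar aK] := map_of_stays_spec hP cs.
split; first by apply/and4P; split; apply/eqP; rewrite /decode ?ah ?af ?ar //; lia.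
rewrite /encode -[RHS](set_of_path_of_set B); apply: set_of_path_ext => y yL.
by rewrite -PK; [apply: cut_plateau_ext; apply: aK | ]; lia.
Qed.

End Encoding.

Theorem proposition2p3 (n m p k : nat) :
  2 <= n -> 1 <= m -> m <= p -> p <= k -> k <= n -> p <= n - 1 ->
  #|[set a : {ffun 'I_n -> 'I_n} |
      [&& inOCT a, height a == p, fixn a == m & rwaist a == k]]|
  = 'C(n - m - 1, n - p - 1).
Proof.
move=> n2 m_gt0 mp pk kn pn; case: n n2 kn pn => [//|n'] _ kn pn.
have -> : n'.+1 - m - 1 = n' - m by lia.
have -> : n'.+1 - p - 1 = n' - p by lia.
rewrite -[X in 'C(X, _)]card_ord -card_draws.
have pn' : p <= n' by lia.
apply: (card_bij_in (f := @encode n' m p k) (g := @decode n' m p k)) => [a|B];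
  rewrite !inE.
  exact: encodeK.
exact: decodeK.
Qed.
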